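(* Let $\Gamma=\Gamma(G,X)$ be the cofinite Cayley graph. Then $\alpha\colon X\to G$ generates $G$ topologically (i.e. $\overline{\langle\alpha(X)\rangle}=G$) if and only if $\Gamma$ is cofinitely connected.
   Context: Let $G$ be a cofinite group and let $X=\{*\}\,\dot\cup\, E(X)$ be a cofinite graph with a single vertex $*$, together with a uniformly continuous map $\alpha\colon X\to G$ such that $\alpha( * )=1_G$ and $\alpha(\overline e)=(\alpha(e))^{-1}$ for all $e\in E(X)$. The cofinite Cayley graph $\Gamma(G,X)$ has vertex set $V=G\times\{*\}$ and edge set $E=G\times E(X)$, with $s(g,e)=(g,* )$, $t(g,e)=(g\alpha(e),* )$ and $\overline{(g,e)}=(g\alpha(e),\overline e)$; it carries the product uniform structure from $G\times X$, a fundamental system of compatible cofinite entourages being given by the sets $R\times S$ with $R$ a cofinite congruence on $G$ and $S$ a compatible cofinite entourage on $X$ satisfying $(\alpha\times\alpha)[S]\subseteq R$. A cofinite graph is cofinitely connected if for every compatible cofinite equivalence relation $R$ on it, the quotient graph by $R$ is path connected (any two vertices are joined by a finite string of edges $e_1\cdots e_n$ with $t(e_i)=s(e_{i+1})$). *)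

From Stdlib Require Import List.
Import ListNotations.
Set Implicit Arguments.

Definition rel (T : Type) := T -> T -> Prop.

Definition equiv_rel {T : Type} (R : rel T) : Prop :=
  (forall x, R x x) /\ (forall x y, R x y -> R y x) /\
  (forall x y z, R x y -> R y z -> R x z).

(* finitely many equivalence classes: a finite list of representatives *)
Definition finite_index {T : Type} (R : rel T) : Prop :=
  exists l : list T, forall x, exists y, In y l /\ R x y.

Definition cofinite_rel {T : Type} (R : rel T) : Prop :=
  equiv_rel R /\ finite_index R.

(* A cofinite uniform structure on T, given by a fundamental system [B]
   of cofinite entourages (Hausdorff uniform space). *)
Definition cofinite_base {T : Type} (B : rel T -> Prop) : Prop :=
  (forall R, B R -> cofinite_rel R) /\
  (exists R, B R) /\
  (forall R1 R2, B R1 -> B R2 ->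
     exists R3, B R3 /\ forall x y, R3 x y -> R1 x y /\ R2 x y) /\
  (forall x y, (forall R, B R -> R x y) -> x = y).

(* entourages of the uniform structure generated by the fundamental system B *)
Definition ent {T : Type} (B : rel T -> Prop) (W : rel T) : Prop :=
  exists R, B R /\ forall x y, R x y -> W x y.

Record group := Group {
  gr_car :> Type;
  gmul : gr_car -> gr_car -> gr_car;
  ginv : gr_car -> gr_car;
  gone : gr_car;
  gmulA : forall x y z, gmul x (gmul y z) = gmul (gmul x y) z;
  gmul1l : forall x, gmul gone x = x;
  gmul1r : forall x, gmul x gone = x;
  gmulVl : forall x, gmul (ginv x) x = gone;
  gmulVr : forall x, gmul x (ginv x) = gone
}.

Definition congruence (G : group) (R : rel G) : Prop :=
  equiv_rel R /\
  (forall x x' y y', R x y -> R x' y' -> R (gmul G x x') (gmul G y y')) /\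
  (forall x y, R x y -> R (ginv G x) (ginv G y)).

Record cofgroup := CofGroup {
  cg_grp :> group;
  cg_base : rel cg_grp -> Prop;
  cg_base_ok : cofinite_base cg_base;
  cg_base_congr : forall R, cg_base R -> congruence cg_grp R
}.

(* A graph is a set with a distinguished subset of vertices; s, t, bar are
   given as total maps; by convention they act as the identity on vertices. *)
Record graph_data := GraphData {
  gd_car :> Type;
  gV : gd_car -> Prop;
  gs : gd_car -> gd_car;
  gt : gd_car -> gd_car;
  gbar : gd_car -> gd_car
}.

Definition graph_axioms (X : graph_data) : Prop :=
  (forall v, gV X v -> gs X v = v /\ gt X v = v /\ gbar X v = v) /\
  (forall e, ~ gV X e ->
     gV X (gs X e) /\ gV X (gt X e) /\ ~ gV X (gbar X e) /\
     gbar X (gbar X e) = e /\ gs X (gbar X e) = gt X e).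

Definition compatible (X : graph_data) (R : rel X) : Prop :=
  forall x y, R x y ->
    (gV X x <-> gV X y) /\ R (gs X x) (gs X y) /\ R (gt X x) (gt X y) /\
    R (gbar X x) (gbar X y).

Record cofgraph := CofGraph {
  cgr :> graph_data;
  cgr_ax : graph_axioms cgr;
  cgr_base : rel cgr -> Prop;
  cgr_base_ok : cofinite_base cgr_base;
  cgr_base_compat : forall R, cgr_base R -> compatible cgr R
}.

Record ugraph := UGraph {
  ug :> graph_data;
  ug_ent : rel ug -> Prop
}.

(* Paths in the quotient graph Γ/R between the classes of v and w:
   a finite string of edges [e1]...[en] of Γ/R with [s e1] = [v],
   [t ei] = [s e(i+1)], [t en] = [w] (n = 0 allowed when [v] = [w]). *)
Inductive qpath (X : graph_data) (R : rel X) : X -> X -> Prop :=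
| qpath_nil : forall v w, R v w -> qpath X R v w
| qpath_cons : forall v e w,
    ~ gV X e -> R v (gs X e) -> qpath X R (gt X e) w -> qpath X R v w.

Definition quotient_path_connected (X : graph_data) (R : rel X) : Prop :=
  forall v w, gV X v -> gV X w -> qpath X R v w.

Definition cofinitely_connected (X : ugraph) : Prop :=
  forall R : rel X, cofinite_rel R -> compatible X R -> ug_ent X R ->
    quotient_path_connected X R.

Definition unif_cont (X : cofgraph) (G : cofgroup) (f : X -> G) : Prop :=
  forall W, ent (cg_base G) W ->
    exists V, ent (cgr_base X) V /\ forall x y, V x y -> W (f x) (f y).

Inductive generated (G : group) (A : Type) (f : A -> G) : G -> Prop :=
| gen_one : generated G f (gone G)
| gen_im : forall a, generated G f (f a)
| gen_mul : forall x y, generated G f x -> generated G f y -> generated G f (gmul G x y)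
| gen_inv : forall x, generated G f x -> generated G f (ginv G x).

Definition closure (G : cofgroup) (H : G -> Prop) (g : G) : Prop :=
  forall W, ent (cg_base G) W -> exists h, H h /\ W g h.

Definition top_generates (G : cofgroup) (A : Type) (f : A -> G) : Prop :=
  forall g : G, closure G (generated (cg_grp G) f) g.

(* carrier G × X; vertices G × {star}; s(g,x) = (g, s x) (equal to (g, star) for edges),
   t(g,x) = (g α(x), t x), bar(g,x) = (g α(x), bar x). *)
Definition cayley_data (G : cofgroup) (X : cofgraph) (alpha : X -> G)
  : graph_data :=
  @GraphData (prod (cg_grp G) (cgr X))
    (fun p => gV X (snd p))
    (fun p => (fst p, gs X (snd p)))
    (fun p => (gmul G (fst p) (alpha (snd p)), gt X (snd p)))
    (fun p => (gmul G (fst p) (alpha (snd p)), gbar X (snd p))).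

Definition cayley_ent (G : cofgroup) (X : cofgraph) (W : rel (prod (cg_grp G) (cgr X)))
  : Prop :=
  exists R S, cg_base G R /\ cgr_base X S /\
    forall g h x y, R g h -> S x y -> W (g, x) (h, y).

Definition Cayley (G : cofgroup) (X : cofgraph) (alpha : X -> G) : ugraph :=
  @UGraph (cayley_data G X alpha) (@cayley_ent G X).

(** Walking along an edge [(g, x)] of the Cayley graph multiplies the group
    coordinate on the right by [alpha x], and edges can be walked backwards via
    [bar].  Hence in every quotient [Γ/R] the class of [(g, star)] is joined to the
    class of [(g k, star)] for every [k] in the abstract subgroup generated by
    [alpha X]; if that subgroup is dense, [(g k, star)] is [R]-related to any
    prescribed vertex, so [Γ/R] is connected.  Conversely, for a cofinite
    congruence [R0] on [G], pick a compatible entourage [S] of [X] on which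
    [alpha] is [R0]-uniform; a path from [(1, star)] to [(g, star)] in [Γ/(R0 × S)]
    reads off a word [k] in the generators with [g] [R0]-related to [k]. *)

From Stdlib Require Import List Classical.

Section QuotientPaths.

Context {X : graph_data} {R : rel X} (R_equiv : equiv_rel R).

Lemma qpath_trans {u v w} : qpath X R u v -> qpath X R v w -> qpath X R u w.
Proof.
  destruct R_equiv as [_ [_ R_trans]].
  intros Huv; revert w; induction Huv as [u v Huv | u e v He Hue _ IH]; intros w Hvw.
  - destruct Hvw as [v w Hvw | v e w He Hve Hew].
    + apply qpath_nil; eauto.
    + eapply qpath_cons; eauto.
  - eapply qpath_cons; eauto.
Qed.

Lemma qpath_sym {v w} : graph_axioms X -> qpath X R v w -> qpath X R w v.
Proof.
  destruct R_equiv as [R_refl [R_sym _]].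
  intros [_ Hedge] Hvw.
  induction Hvw as [v w Hvw | v e w He Hve _ IH].
  - apply qpath_nil; auto.
  - destruct (Hedge e He) as [_ [_ [Hbe [Hbb Hsb]]]].
    assert (Htb : gt X (gbar X e) = gs X e).
    { destruct (Hedge _ Hbe) as [_ [_ [_ [Hbbb Hsbb]]]].
      rewrite <- Hsbb, Hbb; reflexivity. }
    apply (qpath_trans IH).
    apply qpath_cons with (gbar X e); auto.
    + rewrite Hsb; apply R_refl.
    + rewrite Htb; apply qpath_nil; auto.
Qed.

End QuotientPaths.

Definition prod_rel {A B : Type} (R : rel A) (S : rel B) : rel (A * B) :=
  fun p q => R (fst p) (fst q) /\ S (snd p) (snd q).

Lemma prod_rel_cofinite {A B : Type} (R : rel A) (S : rel B) :
  cofinite_rel R -> cofinite_rel S -> cofinite_rel (prod_rel R S).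
Proof.
  intros [[Rr [Rs Rt]] [lA HlA]] [[Sr [Ss St]] [lB HlB]]; split.
  - unfold prod_rel; split; [|split]; intros; intuition eauto.
  - exists (list_prod lA lB); intros [a b].
    destruct (HlA a) as [a' [Ha' Haa']], (HlB b) as [b' [Hb' Hbb']].
    exists (a', b'); split; [apply in_prod|split]; auto.
Qed.

Lemma congruence_mull {G : group} {R : rel G} g {x y} :
  congruence G R -> R x y -> R (gmul G g x) (gmul G g y).
Proof. intros [[Rr _] [Rm _]] Hxy; apply Rm; auto. Qed.

Section CayleyGraph.

Variables (G : cofgroup) (X : cofgraph) (star : X) (alpha : X -> G).
Hypothesis star_vertex : gV X star.
Hypothesis single_vertex : forall {v : X}, gV X v -> v = star.
Hypothesis alpha_star : alpha star = gone G.
Hypothesis alpha_bar : forall e : X, ~ gV X e -> alpha (gbar X e) = ginv G (alpha e).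

Let Γ := cayley_data G X alpha.

Lemma cayley_graph_axioms : graph_axioms Γ.
Proof.
  destruct (cgr_ax X) as [Hvert Hedge]; split.
  - intros [g v] Hv; simpl in *.
    destruct (Hvert v Hv) as [Hs [Ht Hb]].
    rewrite Hs, Ht, Hb, (single_vertex Hv), alpha_star, gmul1r; auto.
  - intros [g e] He; simpl in *.
    destruct (Hedge e He) as [Hs [Ht [Hbe [Hbb Hsb]]]].
    rewrite alpha_bar, Hbb, Hsb, <- gmulA, gmulVr, gmul1r by exact He; auto.
Qed.

Lemma qpath_cayley_generated {R : rel Γ} {k} : equiv_rel R ->
  generated (cg_grp G) alpha k ->
  forall g, qpath Γ R (g, star) (gmul G g k, star).
Proof.
  intros HR Hk; pose proof HR as [R_refl _].
  induction Hk as [| a | x y _ IHx _ IHy | x _ IH]; intro g.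
  - rewrite gmul1r; apply qpath_nil, R_refl.
  - destruct (classic (gV X a)) as [Ha | Ha].
    + rewrite (single_vertex Ha), alpha_star, gmul1r; apply qpath_nil, R_refl.
    + destruct (proj2 (cgr_ax X) a Ha) as [Hs [Ht _]].
      apply qpath_cons with (g, a); simpl; auto.
      * rewrite (single_vertex Hs); apply R_refl.
      * rewrite (single_vertex Ht); apply qpath_nil, R_refl.
  - rewrite gmulA; exact (qpath_trans HR (IHx g) (IHy _)).
  - apply (qpath_sym HR cayley_graph_axioms).
    specialize (IH (gmul G g (ginv G x))).
    rewrite <- gmulA, gmulVl, gmul1r in IH; exact IH.
Qed.

Lemma qpath_cayley_word {R0 : rel G} {R : rel Γ} {v w} :
  congruence G R0 -> (forall p q, R p q -> R0 (fst p) (fst q)) ->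
  qpath Γ R v w ->
  exists k, generated (cg_grp G) alpha k /\ R0 (fst w) (gmul G (fst v) k).
Proof.
  intros HR0 HRR0 Hvw; destruct HR0 as [[R0r [R0s R0t]] [R0m _]].
  induction Hvw as [v w Hvw | v e w He Hve _ [k [Hk Hwk]]].
  - exists (gone G); split; [constructor|].
    rewrite gmul1r; apply R0s, HRR0, Hvw.
  - exists (gmul G (alpha (snd e)) k); split.
    + apply gen_mul; [apply gen_im | exact Hk].
    + apply (R0t _ _ _ Hwk); simpl.
      rewrite gmulA; apply R0m; [apply R0m | apply R0r].
      * apply R0s, (HRR0 _ _ Hve).
      * apply R0r.
Qed.

Lemma top_generates_cofinitely_connected :
  top_generates G alpha -> cofinitely_connected (Cayley G X alpha).
Proof.
  intros Htop R [HR _] _ [R0 [S [HR0 [HS HR0S]]]] [g x] [h y] Hx Hy.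
  simpl in Hx, Hy; rewrite (single_vertex Hx), (single_vertex Hy).
  destruct (proj1 (cgr_base_ok X) S HS) as [[S_refl _] _].
  pose proof (cg_base_congr G R0 HR0) as HR0c.
  destruct (Htop (gmul G (ginv G g) h) R0) as [k [Hk Hhk]].
  { exists R0; auto. }
  apply (qpath_trans HR (qpath_cayley_generated HR Hk g)).
  pose proof (congruence_mull g HR0c Hhk) as Hgk.
  rewrite gmulA, gmulVr, gmul1l in Hgk.
  destruct HR0c as [[_ [R0s _]] _].
  apply qpath_nil, HR0S; [apply R0s, Hgk | apply S_refl].
Qed.

Lemma cayley_prod_rel_compatible (R0 : rel G) (S : rel X) :
  congruence G R0 -> compatible X S -> (forall x y, S x y -> R0 (alpha x) (alpha y)) ->
  compatible Γ (prod_rel R0 S).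
Proof.
  intros [[R0r _] [R0m _]] HS Halpha [g x] [h y] [Hgh Hxy]; simpl in *.
  destruct (HS x y Hxy) as [HV [Hs [Ht Hb]]].
  unfold prod_rel; simpl; repeat split; try apply R0m; auto; apply HV; auto.
Qed.

Hypothesis alpha_unif_cont : unif_cont X G alpha.

Lemma cofinitely_connected_top_generates :
  cofinitely_connected (Cayley G X alpha) -> top_generates G alpha.
Proof.
  intros Hcc g W [R0 [HR0 HW]].
  pose proof (cg_base_congr G R0 HR0) as HR0c.
  destruct (alpha_unif_cont R0) as [V [[S [HS HSV]] HValpha]]; [exists R0; auto|].
  assert (HR : cofinite_rel (prod_rel R0 S)).
  { apply prod_rel_cofinite; [apply (cg_base_ok G) | apply (cgr_base_ok X)]; auto. }
  assert (Hpath : qpath Γ (prod_rel R0 S) (gone G, star) (g, star)).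
  { apply Hcc; auto.
    - apply cayley_prod_rel_compatible; [exact HR0c | exact (cgr_base_compat X S HS) |].
      intros x y Hxy; apply HValpha, HSV, Hxy.
    - exists R0, S; repeat split; auto. }
  destruct (qpath_cayley_word HR0c (fun p q => @proj1 _ _) Hpath) as [k [Hk Hgk]].
  simpl in Hgk; rewrite gmul1l in Hgk.
  exists k; auto.
Qed.

End CayleyGraph.

Theorem mainTheorem8 (G : cofgroup) (X : cofgraph) (star : X) (alpha : X -> G)
  (Hsingle : forall x : X, gV X x <-> x = star)
  (Huc : unif_cont X G alpha)
  (Hstar : alpha star = gone G)
  (Hbar : forall e : X, ~ gV X e -> alpha (gbar X e) = ginv G (alpha e)) :
  top_generates G alpha <-> cofinitely_connected (Cayley G X alpha).
Proof.
  assert (star_vertex : gV X star) by (apply Hsingle; reflexivity).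
  assert (single_vertex : forall v, gV X v -> v = star) by (intro v; apply Hsingle).
  split.
  - apply top_generates_cofinitely_connected with star; assumption.
  - apply cofinitely_connected_top_generates with star; assumption.
Qed.
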